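(* Let $A$ be a vector space with a bilinear operation $\circ:A\otimes A\to A$ which is commutative, i.e. $x\circ y=y\circ x$ for all $x,y\in A$. Then $(A,\circ)$ is an anti-pre-Lie algebra if and only if $(A,\circ)$ is associative.
   Context: All vector spaces are finite-dimensional over a field $\mathbb F$ of characteristic $0$. An anti-pre-Lie algebra is a vector space $A$ with a bilinear operation $\circ$ such that, writing $[x,y]=x\circ y-y\circ x$, for all $x,y,z\in A$: (i) $x\circ(y\circ z)-y\circ(x\circ z)=[y,x]\circ z$, and (ii) $[x,y]\circ z+[y,z]\circ x+[z,x]\circ y=0$. *)

From mathcomp Require Import all_boot all_order all_algebra.
Set Implicit Arguments. Unset Strict Implicit. Unset Printing Implicit Defensive.
Import GRing.Theory.
Local Open Scope ring_scope.

Definition bilinear_op (F : fieldType) (V : lmodType F) (m : V -> V -> V) : Prop :=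
  (forall (a : F) (x y z : V), m (a *: x + y) z = a *: m x z + m y z) /\
  (forall (a : F) (x y z : V), m z (a *: x + y) = a *: m z x + m z y).

Definition commutator_op (V : zmodType) (m : V -> V -> V) (x y : V) : V :=
  m x y - m y x.

Definition anti_pre_Lie (V : zmodType) (m : V -> V -> V) : Prop :=
  (forall x y z : V,
      m x (m y z) - m y (m x z) = m (commutator_op m y x) z) /\
  (forall x y z : V,
      m (commutator_op m x y) z + m (commutator_op m y z) x
        + m (commutator_op m z x) y = 0).

Definition commutative_op (V : Type) (m : V -> V -> V) : Prop :=
  forall x y : V, m x y = m y x.

Definition associative_op (V : Type) (m : V -> V -> V) : Prop :=
  forall x y z : V, m (m x y) z = m x (m y z).

From mathcomp Require Import all_boot all_order all_algebra.
Set Implicit Arguments. Unset Strict Implicit. Unset Printing Implicit Defensive.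
Local Open Scope ring_scope.
Import GRing.Theory.

(** For a commutative product every commutator vanishes, so identity (ii)
    is trivial and identity (i) reduces to left commutativity
    [x(yz) = y(xz)]; for a commutative product left commutativity is
    associativity. Neither the characteristic nor finite dimensionality
    plays any role. *)

Lemma bilinear_op_0l (F : fieldType) (V : lmodType F) (m : V -> V -> V) :
  bilinear_op m -> forall z, m 0 z = 0.
Proof.
case=> linl _ z; have := linl 1 0 0 z; rewrite !scale1r addr0 => m0zD.
by apply: (addrI (m 0 z)); rewrite addr0 -m0zD.
Qed.

Lemma comm_left_commutative_iff_assoc (T : Type) (m : T -> T -> T) :
  commutative m -> left_commutative m <-> associative_op m.
Proof.
move=> mC; split=> [mCA x y z | mA x y z].
  by rewrite mC mCA (mC z).
by rewrite -mA (mC x) mA.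
Qed.

Section CommutativeProduct.

Variables (V : zmodType) (m : V -> V -> V).
Hypotheses (m0l : forall z, m 0 z = 0) (mC : commutative m).

Lemma commutator_op_comm x y : commutator_op m x y = 0.
Proof. by rewrite /commutator_op mC subrr. Qed.

Lemma anti_pre_Lie_comm : anti_pre_Lie m <-> left_commutative m.
Proof.
rewrite /anti_pre_Lie; split=> [[mi _] x y z | mCA].
  by apply/eqP; rewrite -subr_eq0 mi commutator_op_comm m0l.
split=> x y z; rewrite !commutator_op_comm !m0l ?addr0 //.
by rewrite mCA subrr.
Qed.

End CommutativeProduct.

Theorem proposition2p6 (F : fieldType) (V : vectType F)
  (charF0 : [pchar F] =i pred0)
  (m : V -> V -> V) (hbil : bilinear_op m) (hcomm : commutative_op m) :
  anti_pre_Lie m <-> associative_op m.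
Proof.
apply: iff_trans (comm_left_commutative_iff_assoc hcomm).
exact: anti_pre_Lie_comm (bilinear_op_0l hbil) hcomm.
Qed.
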